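(* Suppose the execution of MaxHedge with parameters $s>1$ and $\rho$ is valid, and an online algorithm ALG with responses $P_j$ is cautious in every round up to and including round $i$ (with $i$ in the domain of MaxHedge). Let $\mathrm{ALG}'$ be the algorithm that responds with $Z_1,\dots,Z_{i-1}$ in rounds $1,\dots,i-1$ and with $P_i$ in round $i$. Then $\mathrm{ALG}(\mathbf X_i;\alpha)\ge\mathrm{ALG}'(\mathbf X_i;\alpha)$.
   Context: Fix $\alpha\in(0,\pi/4]$. A drone at $(t_x,t_y)$, $t_y\ge0$, covers $[t_x-t_y\tan\alpha,t_x+t_y\tan\alpha]$ on the $x$-axis; $\mathrm{FC}(X_0,\dots,X_i)$ denotes the set of positions covering $X_0,\dots,X_i$. Fix $s>1$ and the requests $X_0=(0,0)$, $X_i=(2(-s)^{i-1},0)$ for $i\ge1$; $\mathbf X_i=(X_0,\dots,X_i)$. Let $T_i$ be the apex of $\mathrm{FC}(X_0,\dots,X_i)$: $T_0=X_0$, $T_1=(1,\cot\alpha)$, $T_i=((-s)^{i-2}(1-s),\ s^{i-2}(1+s)\cot\alpha)$ for $i\ge2$. Let $o_i=|X_0T_i|$, the optimal offline cost for $\mathbf X_i$ ($o_0=0$). MaxHedge with parameter $\rho>0$: $Z_0=X_0$; for $i\ge1$, $Z_i=T_i+z_i(T_{i+1}-T_i)$ with $z_i\ge0$ is the intersection of the halfline from $T_i$ through $T_{i+1}$ with the circle centred at $Z_{i-1}$ of radius $\rho(o_i-o_{i-1})$; if no such point exists, MaxHedge fails in round $i$. Its domain is $\{0,\dots,i-1\}$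 if it fails in round $i$, and all rounds otherwise. The execution is valid if for every round $i\ge1$ in the domain, $Z_i$ lies on the same side of the $y$-axis as $T_i$. An online algorithm ALG responds with $P_0=X_0$ and $P_i\in\mathrm{FC}(X_0,\dots,X_i)$ chosen knowing only $X_0,\dots,X_i$; its cost on $\mathbf X_i$ is $\mathrm{ALG}(\mathbf X_i;\alpha)=\sum_{j=0}^{i-1}|P_jP_{j+1}|$. ALG is cautious in round $j$ if $P_j$ lies in the closed disk centred at $Z_{j-1}$ of radius $|Z_{j-1}Z_j|$. *)

From Stdlib Require Import Reals Lra.
Open Scope R_scope.

Definition pt := (R * R)%type.

Definition dist (P Q : pt) : R :=
  sqrt ((fst Q - fst P) ^ 2 + (snd Q - snd P) ^ 2).

Definition cot (a : R) : R := / tan a.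

Definition Xreq (s : R) (i : nat) : pt :=
  match i with
  | O => (0, 0)
  | S k => (2 * (- s) ^ k, 0)
  end.

(* A drone at t covers [t_x - t_y tan a, t_x + t_y tan a];
   FC(X_0,...,X_i) = positions with t_y >= 0 covering all X_0..X_i. *)
Definition in_FC (a s : R) (i : nat) (t : pt) : Prop :=
  0 <= snd t /\
  forall k, (k <= i)%nat ->
    fst t - snd t * tan a <= fst (Xreq s k) <= fst t + snd t * tan a.

Definition Tapex (a s : R) (i : nat) : pt :=
  match i with
  | O => (0, 0)
  | 1%nat => (1, cot a)
  | S (S k) => ((- s) ^ k * (1 - s), s ^ k * (1 + s) * cot a)
  end.

Definition oopt (a s : R) (i : nat) : R := dist (Xreq s 0) (Tapex a s i).

Definition mh_candidate (a s rho : R) (j : nat) (prev p : pt) : Prop :=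
  exists z, 0 <= z /\
    p = (fst (Tapex a s (S j)) + z * (fst (Tapex a s (S (S j))) - fst (Tapex a s (S j))),
         snd (Tapex a s (S j)) + z * (snd (Tapex a s (S (S j))) - snd (Tapex a s (S j)))) /\
    dist prev p = rho * (oopt a s (S j) - oopt a s j).

(* An execution of MaxHedge: Z is the sequence of responses, D the domain
   (set of rounds actually executed). *)
Definition maxhedge_exec (a s rho : R) (Z : nat -> pt) (D : nat -> Prop) : Prop :=
  Z 0%nat = Xreq s 0 /\ D 0%nat /\
  (forall j, D (S j) <-> (D j /\ exists p, mh_candidate a s rho j (Z j) p)) /\
  (forall j, D (S j) -> mh_candidate a s rho j (Z j) (Z (S j))).

Definition mh_valid (a s : R) (Z : nat -> pt) (D : nat -> Prop) : Prop :=
  forall j, (1 <= j)%nat -> D j -> 0 < fst (Z j) * fst (Tapex a s j).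

Fixpoint cost (P : nat -> pt) (i : nat) : R :=
  match i with
  | O => 0
  | S k => cost P k + dist (P k) (P (S k))
  end.

Definition alg' (Z P : nat -> pt) (i : nat) : nat -> pt :=
  fun j => if Nat.ltb j i then Z j else P i.

Definition cautious (Z P : nat -> pt) (j : nat) : Prop :=
  dist (Z (pred j)) (P j) <= dist (Z (pred j)) (Z j).

From Pilot Require Import Defs.
From Stdlib Require Import Reals Lra Psatz Lia.
(* Re-imported so that [dist] is the Euclidean distance of Defs, not Stdlib's metric-space one. *)
Import Defs.
Open Scope R_scope.

(* Write points in oblique coordinates along the two boundary directions
   of the feasible cones.  MaxHedge's Z_k lies on the leg [T_k, T_(k+1)] before the
   point where that leg crosses the y-axis, and the crossings of two consecutive legs
   are equidistant from their common apex; hence Z_(k+1) is no farther from T_(k+1)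
   along the next leg than Z_k is.  The theorem then follows by induction from the
   exchange inequality
     |Z_n Z_(n+1)| + |Z_(n+1) P_(n+2)| <= |Z_n P_(n+1)| + |P_(n+1) P_(n+2)|.
   Cautiousness bounds the second-leg coordinate of P_(n+1) by that of Z_(n+1), and the
   first-leg coordinate of P_(n+2) by that of Z_(n+2), so the direction w of Z_(n+1) -> P_(n+2) is turned further
   toward the second leg than the direction v of Z_n -> Z_(n+1); then
   (P_(n+1) - Z_(n+1)) . (v - w) >= 0, and projecting |Z_n P_(n+1)| onto v and
   |P_(n+1) P_(n+2)| onto w gives the inequality. *)

Definition vec (P Q : pt) : pt := (fst Q - fst P, snd Q - snd P).

Definition dot (v w : pt) : R := fst v * fst w + snd v * snd w.

Lemma dist_sqr P Q : dist P Q * dist P Q = dot (vec P Q) (vec P Q).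
Proof.
  unfold dist, dot, vec; cbn [fst snd].
  rewrite sqrt_sqrt; [ring|].
  apply Rplus_le_le_0_compat; apply pow2_ge_0.
Qed.

Lemma dot_le_dist A B C D : dot (vec A B) (vec C D) <= dist A B * dist C D.
Proof. unfold dot, vec, dist; cbn [fst snd]; rewrite <- !Rsqr_pow2; apply sqrt_cauchy. Qed.

(* With v, w the unit directions of AB and BC, the hypothesis reads (P - B).(v - w) >= 0. *)
Lemma detour_le A B C P :
  0 < dist A B -> 0 < dist B C ->
  dist A B * dot (vec B P) (vec B C) <= dist B C * dot (vec B P) (vec A B) ->
  dist A B + dist B C <= dist A P + dist P C.
Proof.
  intros Hr HL Hturn.
  pose proof (dot_le_dist A P A B) as HAP.
  pose proof (dot_le_dist P C B C) as HPC.
  assert (EAP : dot (vec A P) (vec A B) = dist A B * dist A B + dot (vec B P) (vec A B))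
    by (rewrite dist_sqr; unfold dot, vec; cbn [fst snd]; ring).
  assert (EPC : dot (vec P C) (vec B C) = dist B C * dist B C - dot (vec B P) (vec B C))
    by (rewrite dist_sqr; unfold dot, vec; cbn [fst snd]; ring).
  apply (Rmult_le_reg_l (dist A B * dist B C)); [nra|].
  nra.
Qed.

(* Oblique coordinates: [frame O u x y] is O + x (u, 1) + y (-u, 1), and [cone_dot u] is
   the Euclidean inner product expressed in these coordinates. *)
Definition frame (O : pt) (u x y : R) : pt := (fst O + (x - y) * u, snd O + (x + y)).

Definition cone_dot (u p q p' q' : R) : R :=
  (1 + u ^ 2) * (p * p' + q * q') + (1 - u ^ 2) * (p * q' + q * p').

Lemma frame_frame O u x y x' y' : frame (frame O u x y) u x' y' = frame O u (x + x') (y + y').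
Proof. unfold frame; cbn [fst snd]; f_equal; ring. Qed.

Lemma frame_opp O u x y : frame O (- u) x y = frame O u y x.
Proof. unfold frame; f_equal; ring. Qed.

Lemma dot_frame O u x1 y1 x2 y2 x3 y3 x4 y4 p q p' q' :
  x2 - x1 = p -> y2 - y1 = q -> x4 - x3 = p' -> y4 - y3 = q' ->
  dot (vec (frame O u x1 y1) (frame O u x2 y2)) (vec (frame O u x3 y3) (frame O u x4 y4))
  = cone_dot u p q p' q'.
Proof. intros <- <- <- <-; unfold dot, vec, frame, cone_dot; cbn [fst snd]; ring. Qed.

Lemma dist_frame O u x1 y1 x2 y2 p q :
  x2 - x1 = p -> y2 - y1 = q ->
  dist (frame O u x1 y1) (frame O u x2 y2) = sqrt (cone_dot u p q p q).
Proof. intros <- <-; unfold dist, frame, cone_dot; cbn [fst snd]; f_equal; ring. Qed.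

Lemma cone_dot_swap u p q p' q' : cone_dot u p q p' q' = cone_dot u q p q' p'.
Proof. unfold cone_dot; ring. Qed.

Section Cone.

Variable u : R.
Hypothesis Hu : u ^ 2 <= 1.

Lemma cone_dot_ge0 p q p' q' :
  0 <= p -> 0 <= q -> 0 <= p' -> 0 <= q' -> 0 <= cone_dot u p q p' q'.
Proof.
  intros; unfold cone_dot; pose proof (pow2_ge_0 u).
  apply Rplus_le_le_0_compat; apply Rmult_le_pos; nra.
Qed.

Lemma cone_norm_gt0 p q : 0 < p -> 0 <= q -> 0 < cone_dot u p q p q.
Proof.
  intros Hp Hq; unfold cone_dot; pose proof (pow2_ge_0 u).
  assert (0 < (1 + u ^ 2) * (p * p + q * q)) by (apply Rmult_lt_0_compat; nra).
  assert (0 <= (1 - u ^ 2) * (p * q + q * p)) by (apply Rmult_le_pos; nra).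
  lra.
Qed.

Lemma cone_norm_le_coord x y x' y' :
  0 <= x <= x' -> 0 <= y -> cone_dot u x' y' x' y' <= cone_dot u x y x y -> y' <= y.
Proof.
  intros Hx Hy Hle. apply Rnot_lt_le; intros Hlt.
  pose proof (pow2_ge_0 u). unfold cone_dot in Hle.
  assert (x * y <= x' * y') by nra.
  assert (0 <= (1 + u ^ 2) * (x' * x' - x * x)) by (apply Rmult_le_pos; nra).
  assert (0 < (1 + u ^ 2) * (y' * y' - y * y)) by (apply Rmult_lt_0_compat; nra).
  assert (0 <= (1 - u ^ 2) * (x' * y' - x * y)) by (apply Rmult_le_pos; nra).
  nra.
Qed.

(* The angle between (p, q) and the first axis is at least that between (c, d) and it. *)
Lemma cone_angle_mono c d p q :
  0 <= c -> 0 <= d -> 0 <= p -> 0 <= q -> p * d <= c * q ->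
  sqrt (cone_dot u c d c d) * cone_dot u 1 0 p q
  <= sqrt (cone_dot u p q p q) * cone_dot u 1 0 c d.
Proof.
  intros Hc Hd Hp Hq Hpd.
  pose proof (pow2_ge_0 u) as Hu0.
  assert (Hl : 0 <= (1 + u ^ 2) ^ 2 - (1 - u ^ 2) ^ 2) by nra.
  pose proof (cone_dot_ge0 c d c d Hc Hd Hc Hd) as Hn.
  pose proof (cone_dot_ge0 p q p q Hp Hq Hp Hq) as Hn'.
  apply Rsqr_incr_0_var; [|apply Rmult_le_pos; [apply sqrt_pos|]; apply cone_dot_ge0; lra].
  rewrite !Rsqr_mult, !Rsqr_sqrt by assumption.
  unfold Rsqr.
  assert (E : cone_dot u 1 0 c d * cone_dot u 1 0 c d * cone_dot u p q p q
              - cone_dot u c d c d * (cone_dot u 1 0 p q * cone_dot u 1 0 p q)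
            = ((1 + u ^ 2) ^ 2 - (1 - u ^ 2) ^ 2) * (c * q - p * d)
              * ((1 + u ^ 2) * (c * q + p * d) + 2 * (1 - u ^ 2) * d * q))
    by (unfold cone_dot; ring).
  assert (0 <= ((1 + u ^ 2) ^ 2 - (1 - u ^ 2) ^ 2) * (c * q - p * d)
              * ((1 + u ^ 2) * (c * q + p * d) + 2 * (1 - u ^ 2) * d * q)).
  { apply Rmult_le_pos; [apply Rmult_le_pos; lra|].
    assert (0 <= (1 - u ^ 2) * d * q) by (apply Rmult_le_pos; [apply Rmult_le_pos|]; lra).
    assert (0 <= (1 + u ^ 2) * (c * q + p * d)) by (apply Rmult_le_pos; nra).
    lra. }
  lra.
Qed.

End Cone.

Lemma cone_dot_split u p q p' q' :
  cone_dot u p q p' q' = p * cone_dot u 1 0 p' q' + q * cone_dot u 1 0 q' p'.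
Proof. unfold cone_dot; ring. Qed.

Lemma cautious_two_legs O u c d h d' a b a' b' :
  u ^ 2 <= 1 -> 0 < c -> 0 <= d <= c -> d < h -> 0 <= d' <= h - d ->
  0 <= a -> 0 <= b -> 0 <= a' -> 0 <= b' ->
  let Zm := frame O u (- c) 0 in let Zk := frame O u 0 d in let Zn := frame O u d' h in
  let P := frame O u a b in let Q := frame O u a' (h + b') in
  dist Zm P <= dist Zm Zk -> dist Zk Q <= dist Zk Zn ->
  dist Zm Zk + dist Zk Q <= dist Zm P + dist P Q.
Proof.
  intros Hu Hc Hd Hh Hd' Ha Hb Ha' Hb' Zm Zk Zn P Q Hcaut1 Hcaut2.
  set (m := h + b' - d).
  assert (Hm : h - d <= m) by (unfold m; lra).
  assert (EZmP : dist Zm P = sqrt (cone_dot u (a + c) b (a + c) b)) by (apply dist_frame; ring).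
  assert (EZmZk : dist Zm Zk = sqrt (cone_dot u c d c d)) by (apply dist_frame; ring).
  assert (EZkQ : dist Zk Q = sqrt (cone_dot u a' m a' m)) by (apply dist_frame; unfold m; ring).
  assert (EZkZn : dist Zk Zn = sqrt (cone_dot u d' (h - d) d' (h - d))) by (apply dist_frame; ring).
  rewrite EZmP, EZmZk in Hcaut1. rewrite EZkQ, EZkZn in Hcaut2.
  apply sqrt_le_0 in Hcaut1, Hcaut2; try (apply cone_dot_ge0; lra).
  assert (Hbd : b <= d) by (apply (cone_norm_le_coord u Hu c d (a + c) b); lra).
  assert (Had : a' <= d').
  { rewrite (cone_dot_swap u a'), (cone_dot_swap u d') in Hcaut2.
    apply (cone_norm_le_coord u Hu (h - d) d' m a'); lra. }
  assert (Hr : 0 < dist Zm Zk)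
    by (rewrite EZmZk; apply sqrt_lt_R0, cone_norm_gt0; lra).
  assert (HL : 0 < dist Zk Q)
    by (rewrite EZkQ, cone_dot_swap; apply sqrt_lt_R0, cone_norm_gt0; lra).
  apply detour_le; [exact Hr | exact HL |].
  assert (E1 : dot (vec Zk P) (vec Zk Q) = cone_dot u a (b - d) a' m)
    by (apply dot_frame; unfold m; ring).
  assert (E2 : dot (vec Zk P) (vec Zm Zk) = cone_dot u a (b - d) c d)
    by (apply dot_frame; ring).
  rewrite E1, E2, !(cone_dot_split u a), EZmZk, EZkQ.
  assert (Hcm : a' * d <= c * m) by nra.
  pose proof (cone_angle_mono u Hu c d a' m ltac:(lra) ltac:(lra) ltac:(lra) ltac:(lra) Hcm)
    as Hfirst.
  pose proof (cone_angle_mono u Hu m a' d c ltac:(lra) ltac:(lra) ltac:(lra) ltac:(lra) ltac:(lra))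
    as Hsecond.
  rewrite (cone_dot_swap u m), (cone_dot_swap u d c) in Hsecond.
  assert (0 <= a * (sqrt (cone_dot u a' m a' m) * cone_dot u 1 0 c d
                     - sqrt (cone_dot u c d c d) * cone_dot u 1 0 a' m))
    by (apply Rmult_le_pos; lra).
  assert (0 <= (d - b) * (sqrt (cone_dot u c d c d) * cone_dot u 1 0 m a'
                          - sqrt (cone_dot u a' m a' m) * cone_dot u 1 0 d c))
    by (apply Rmult_le_pos; lra).
  lra.
Qed.

(* Leg k is the segment [T_k, T_(k+1)]: T_(k+1) - T_k = leg s k * ((-1)^k, cot a), and
   [leg_point a s k z] is T_k + z (T_(k+1) - T_k).  The leg crosses the y-axis at
   z = axis_param s k (T_0 lies on the axis). *)
Definition leg (s : R) (k : nat) : R :=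
  match k with O => 1 | 1%nat => s | S (S j) => s ^ j * (s * s - 1) end.

Definition axis_param (s : R) (k : nat) : R :=
  match k with O => 0 | 1%nat => / s | _ => / (1 + s) end.

Definition leg_dir (a : R) (k : nat) : R := (-1) ^ k * tan a.

Definition leg_point (a s : R) (k : nat) (z : R) : pt :=
  frame (Tapex a s k) (leg_dir a k) (z * (leg s k * cot a)) 0.

Lemma sign_cases k : (-1) ^ k = 1 \/ (-1) ^ k = -1.
Proof. induction k as [|k [E|E]]; cbn [pow]; rewrite ?E; lra. Qed.

Lemma pow_opp s k : (- s) ^ k = (-1) ^ k * s ^ k.
Proof. rewrite <- Rpow_mult_distr; f_equal; ring. Qed.

Lemma leg_dir_S a k : leg_dir a (S k) = - leg_dir a k.
Proof. unfold leg_dir; cbn [pow]; ring. Qed.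

Section Legs.

Variables a s : R.
Hypothesis Ha : 0 < a <= PI / 4.
Hypothesis Hs : 1 < s.

Lemma tan_pos : 0 < tan a.
Proof. pose proof PI_RGT_0; apply tan_gt_0; lra. Qed.

Lemma tan_le_1 : tan a <= 1.
Proof. pose proof PI_RGT_0; rewrite <- tan_PI4; apply tan_incr_1; lra. Qed.

Lemma cot_pos : 0 < cot a.
Proof. apply Rinv_0_lt_compat, tan_pos. Qed.

Lemma leg_pos k : 0 < leg s k.
Proof.
  destruct k as [|[|j]]; cbn [leg]; try lra.
  apply Rmult_lt_0_compat; [apply pow_lt|]; nra.
Qed.

Lemma axis_param_lt_1 k : axis_param s k < 1.
Proof.
  destruct k as [|[|j]]; cbn [axis_param]; try lra;
    [rewrite <- Rinv_1 | rewrite <- Rinv_1]; apply Rinv_lt_contravar; lra.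
Qed.

Lemma axis_param_pos k : (1 <= k)%nat -> 0 < axis_param s k.
Proof. intros Hk; destruct k as [|[|j]]; [lia| |]; cbn; apply Rinv_0_lt_compat; lra. Qed.

(* The y-axis crossings of two consecutive legs lie at the same distance from their
   common apex. *)
Lemma axis_param_leg_sum k :
  axis_param s k * leg s k + axis_param s (S k) * leg s (S k) = leg s k.
Proof. destruct k as [|[|j]]; cbn [axis_param leg pow]; field; lra. Qed.

Lemma leg_gap k z z' :
  0 <= z <= axis_param s k -> 0 <= z' <= axis_param s (S k) ->
  z' * (leg s (S k) * cot a) <= (1 - z) * (leg s k * cot a).
Proof.
  intros Hz Hz'.
  pose proof (axis_param_leg_sum k). pose proof (leg_pos k). pose proof (leg_pos (S k)).
  rewrite <- !Rmult_assoc; apply Rmult_le_compat_r; [apply Rlt_le, cot_pos|].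
  nra.
Qed.

Lemma leg_dir_sqr_le_1 k : leg_dir a k ^ 2 <= 1.
Proof.
  pose proof tan_pos; pose proof tan_le_1; unfold leg_dir.
  destruct (sign_cases k) as [-> | ->]; nra.
Qed.

Lemma apex_succ k : Tapex a s (S k) = leg_point a s k 1.
Proof.
  pose proof tan_pos.
  unfold leg_point, leg_dir, frame.
  destruct k as [|[|j]]; cbn [Tapex leg fst snd]; f_equal; rewrite ?pow_opp; cbn [pow];
    unfold cot; field; lra.
Qed.

Lemma leg_point_before k z :
  leg_point a s k z = frame (Tapex a s (S k)) (leg_dir a k) (- ((1 - z) * (leg s k * cot a))) 0.
Proof. rewrite apex_succ; unfold leg_point; rewrite frame_frame; f_equal; ring. Qed.

Lemma leg_point_after k z :
  leg_point a s (S k) z = frame (Tapex a s (S k)) (leg_dir a k) 0 (z * (leg s (S k) * cot a)).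
Proof. unfold leg_point; rewrite leg_dir_S, frame_opp; reflexivity. Qed.

Lemma leg_point_axis k z :
  axis_param s k * fst (leg_point a s k z) = (axis_param s k - z) * fst (Tapex a s k).
Proof.
  pose proof tan_pos.
  unfold leg_point, leg_dir, frame.
  destruct k as [|[|j]]; cbn [Tapex leg axis_param fst]; rewrite ?pow_opp; cbn [pow];
    unfold cot; field; lra.
Qed.

Lemma mh_candidate_leg_point rho j prev p :
  mh_candidate a s rho j prev p -> exists z, 0 <= z /\ p = leg_point a s (S j) z.
Proof.
  intros [z [Hz [-> _]]]; exists z; split; [exact Hz|].
  rewrite (apex_succ (S j)); unfold leg_point, frame; cbn [fst snd]; f_equal; ring.
Qed.

Lemma apex_boundary k :
  let T := Tapex a s (S k) in
  (fst T - snd T * tan a = fst (Xreq s k) /\ fst T + snd T * tan a = fst (Xreq s (S k))) \/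
  (fst T - snd T * tan a = fst (Xreq s (S k)) /\ fst T + snd T * tan a = fst (Xreq s k)).
Proof.
  pose proof tan_pos; cbn zeta.
  destruct k as [|m]; cbn [Tapex Xreq fst snd]; unfold cot.
  - left; split; field; lra.
  - rewrite !pow_opp; cbn [pow].
    destruct (sign_cases m) as [E|E]; rewrite E; [right|left]; split; field; lra.
Qed.

Lemma in_FC_frame k P :
  in_FC a s (S k) P ->
  exists x y, 0 <= x /\ 0 <= y /\ P = frame (Tapex a s (S k)) (tan a) x y.
Proof.
  intros [_ Hcover]. pose proof tan_pos as Ht.
  pose proof (apex_boundary k) as Hapex; cbn zeta in Hapex.
  set (T := Tapex a s (S k)) in *.
  assert (Hbound : fst P - snd P * tan a <= fst T - snd T * tan a /\
                   fst T + snd T * tan a <= fst P + snd P * tan a).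
  { pose proof (Hcover k (Nat.le_succ_diag_r k)) as H1.
    pose proof (Hcover (S k) (le_n (S k))) as H2.
    destruct Hapex as [[-> ->] | [-> ->]]; lra. }
  exists ((fst P + snd P * tan a - (fst T + snd T * tan a)) / (2 * tan a)).
  exists ((fst T - snd T * tan a - (fst P - snd P * tan a)) / (2 * tan a)).
  repeat split.
  - apply Rmult_le_pos; [lra | apply Rlt_le, Rinv_0_lt_compat; lra].
  - apply Rmult_le_pos; [lra | apply Rlt_le, Rinv_0_lt_compat; lra].
  - destruct P as [px py]; unfold frame; cbn [fst snd]; f_equal; field; lra.
Qed.

Lemma in_FC_leg_frame k j P :
  in_FC a s (S k) P ->
  exists x y, 0 <= x /\ 0 <= y /\ P = frame (Tapex a s (S k)) (leg_dir a j) x y.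
Proof.
  intros HP; destruct (in_FC_frame k P HP) as [x [y [Hx [Hy ->]]]]; unfold leg_dir.
  destruct (sign_cases j) as [-> | ->].
  - exists x, y; rewrite Rmult_1_l; auto.
  - exists y, x; rewrite <- frame_opp; repeat split; auto; f_equal; ring.
Qed.

Section Execution.

Variables (rho : R) (Z : nat -> pt) (D : nat -> Prop).
Hypothesis Hexec : maxhedge_exec a s rho Z D.
Hypothesis Hvalid : mh_valid a s Z D.

Lemma domain_le i k : D i -> (k <= i)%nat -> D k.
Proof.
  destruct Hexec as [_ [_ [Hdom _]]].
  intros Hi Hk; induction Hk as [|m _ IH]; [exact Hi|].
  apply IH, Hdom, Hi.
Qed.

Lemma hedge_on_leg k :
  D k -> exists z, 0 <= z <= axis_param s k /\ Z k = leg_point a s k z.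
Proof.
  destruct Hexec as [HZ0 [_ [_ Hcand]]].
  destruct k as [|j]; intros Hk.
  - exists 0; split; [cbn; lra|].
    rewrite HZ0; unfold leg_point, frame; cbn; f_equal; ring.
  - destruct (mh_candidate_leg_point rho j _ _ (Hcand j Hk)) as [z [Hz EZ]].
    exists z; repeat split; [exact Hz| |exact EZ].
    pose proof (Hvalid (S j) (le_n_S _ _ (Nat.le_0_l j)) Hk) as Hside.
    pose proof (leg_point_axis (S j) z) as Haxis; rewrite <- EZ in Haxis.
    pose proof (axis_param_pos (S j) (le_n_S _ _ (Nat.le_0_l j))) as Hpos.
    set (tx := fst (Tapex a s (S j))) in *.
    assert (0 < (axis_param s (S j) - z) * (tx * tx)).
    { replace ((axis_param s (S j) - z) * (tx * tx))
        with (axis_param s (S j) * (fst (Z (S j)) * tx)) by (rewrite <- Rmult_assoc, Haxis; ring).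
      apply Rmult_lt_0_compat; assumption. }
    assert (0 <= tx * tx) by nra.
    nra.
Qed.

Section Algorithm.

Variables (P : nat -> pt) (i : nat).
Hypothesis HiD : D i.
Hypothesis HP0 : P 0%nat = Xreq s 0.
Hypothesis HPfc : forall j, (j <= i)%nat -> in_FC a s j (P j).
Hypothesis Hcaut : forall j, (1 <= j <= i)%nat -> cautious Z P j.

Lemma cautious_exchange n : (S (S n) <= i)%nat ->
  dist (Z n) (Z (S n)) + dist (Z (S n)) (P (S (S n)))
  <= dist (Z n) (P (S n)) + dist (P (S n)) (P (S (S n))).
Proof.
  intros Hn.
  destruct (hedge_on_leg n (domain_le i n HiD ltac:(lia))) as [z0 [Hz0 EZ0]].
  destruct (hedge_on_leg (S n) (domain_le i (S n) HiD ltac:(lia))) as [z1 [Hz1 EZ1]].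
  destruct (hedge_on_leg (S (S n)) (domain_le i (S (S n)) HiD Hn)) as [z2 [Hz2 EZ2]].
  destruct (in_FC_leg_frame n n (P (S n)) (HPfc (S n) ltac:(lia))) as [x [y [Hx [Hy EP]]]].
  destruct (in_FC_leg_frame (S n) n (P (S (S n))) (HPfc (S (S n)) Hn))
    as [x' [y' [Hx' [Hy' EQ]]]].
  pose proof (Hcaut (S n) ltac:(lia)) as Hcaut1.
  pose proof (Hcaut (S (S n)) ltac:(lia)) as Hcaut2.
  unfold cautious in Hcaut1, Hcaut2; cbn [pred] in Hcaut1, Hcaut2.
  rewrite leg_point_before in EZ0.
  rewrite leg_point_after in EZ1.
  rewrite leg_point_after, leg_dir_S, frame_opp, apex_succ, leg_point_after, frame_frame in EZ2.
  rewrite apex_succ, leg_point_after, frame_frame in EQ.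
  rewrite Rmult_1_l, Rplus_0_l, Rplus_0_r in EZ2.
  rewrite Rmult_1_l, Rplus_0_l in EQ.
  rewrite EZ0, EZ1, EZ2, EP, EQ in *.
  pose proof (leg_gap n z0 z1 Hz0 Hz1). pose proof (leg_gap (S n) z1 z2 Hz1 Hz2).
  pose proof (axis_param_lt_1 n). pose proof (axis_param_lt_1 (S n)).
  assert (0 < leg s n * cot a) by (apply Rmult_lt_0_compat; [apply leg_pos | apply cot_pos]).
  assert (0 < leg s (S n) * cot a) by (apply Rmult_lt_0_compat; [apply leg_pos | apply cot_pos]).
  assert (0 < leg s (S (S n)) * cot a) by (apply Rmult_lt_0_compat; [apply leg_pos | apply cot_pos]).
  apply (cautious_two_legs _ _ _ _ _ (z2 * (leg s (S (S n)) * cot a)));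
    auto using leg_dir_sqr_le_1; repeat split; nra.
Qed.

Lemma hedge_prefix_cost n : (S n <= i)%nat ->
  cost Z n + dist (Z n) (P (S n)) <= cost P (S n).
Proof.
  induction n as [|n IH]; intros Hn.
  - destruct Hexec as [HZ0 _]; cbn [cost]; rewrite HZ0, <- HP0; lra.
  - pose proof (IH ltac:(lia)); pose proof (cautious_exchange n Hn); cbn [cost] in *; lra.
Qed.

End Algorithm.

End Execution.

End Legs.

Lemma cost_ext f g n : (forall j, (j <= n)%nat -> f j = g j) -> cost f n = cost g n.
Proof.
  induction n as [|n IH]; intros Hfg; cbn [cost]; [reflexivity|].
  rewrite IH, (Hfg n), (Hfg (S n)); auto.
Qed.

Lemma cost_alg'_succ Z P n : cost (alg' Z P (S n)) (S n) = cost Z n + dist (Z n) (P (S n)).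
Proof.
  assert (Hprefix : forall j, (j <= n)%nat -> alg' Z P (S n) j = Z j).
  { intros j Hj; unfold alg'; replace (Nat.ltb j (S n)) with true; [reflexivity|].
    symmetry; apply Nat.ltb_lt; lia. }
  cbn [cost]; rewrite (cost_ext _ Z n Hprefix), Hprefix by lia.
  unfold alg'; rewrite Nat.ltb_irrefl; reflexivity.
Qed.

Theorem lemma13 (a s rho : R) (Ha : 0 < a <= PI / 4) (Hs : 1 < s) (Hrho : 0 < rho)
  (Z : nat -> pt) (D : nat -> Prop)
  (Hexec : maxhedge_exec a s rho Z D) (Hvalid : mh_valid a s Z D)
  (P : nat -> pt) (i : nat) (HiD : D i)
  (HP0 : P 0%nat = Xreq s 0)
  (HPfc : forall j, (j <= i)%nat -> in_FC a s j (P j))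
  (Hcaut : forall j, (1 <= j <= i)%nat -> cautious Z P j) :
  cost (alg' Z P i) i <= cost P i.
Proof.
  destruct i as [|n]; [cbn; lra|].
  rewrite cost_alg'_succ.
  exact (hedge_prefix_cost a s Ha Hs rho Z D Hexec Hvalid P (S n) HiD HP0 HPfc Hcaut n (le_n _)).
Qed.
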